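(* Let $d,q$ be integers with $0\le q<d$, $\gcd(d,q)=1$ and $d\mid q^3+1$, let $\xi$ be a primitive $d$-th root of unity, and $G=\langle\mathrm{diag}(1,\xi,\xi^q),B\rangle\subset\mathrm{GL}_3(\mathbb{C})$ with $B$ the cyclic permutation matrix $(x,y,z)\mapsto(y,z,x)$. Then the number of conjugacy classes of $G$ equals $\frac{d^2+8\gcd(d,q^2-q+1)}{3}$. *)

(* C is modelled by algC (algebraic complex numbers). *)
From HB Require Import structures.
From mathcomp Require Import all_boot all_order all_algebra all_field.
Set Implicit Arguments. Unset Strict Implicit. Unset Printing Implicit Defensive.
Import Order.TTheory GRing.Theory Num.Theory.
Local Open Scope ring_scope.

Definition diagD (xi : algC) (q : nat) : 'M[algC]_3 :=
  \matrix_(i < 3, j < 3)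
    (if i == j then (if (i : nat) == 0%N then 1 else if (i : nat) == 1%N then xi else xi ^+ q)
     else 0).

Definition permB : 'M[algC]_3 :=
  \matrix_(i < 3, j < 3) ((j : nat) == ((i : nat).+1 %% 3)%N)%:R.

Inductive in_gen (n : nat) (S : seq 'M[algC]_n) : 'M[algC]_n -> Prop :=
  | gen_one : in_gen S 1%:M
  | gen_mul x g : x \in S -> in_gen S g -> in_gen S (x *m g)
  | gen_mulV x g : x \in S -> in_gen S g -> in_gen S (invmx x *m g).

Definition conj_in (n : nat) (S : seq 'M[algC]_n) (x y : 'M[algC]_n) : Prop :=
  exists g, in_gen S g /\ y = invmx g *m x *m g.

Definition num_conj_classes (n : nat) (S : seq 'M[algC]_n) (k : nat) : Prop :=
  exists reps : seq 'M[algC]_n,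
    [/\ size reps = k,
        forall x, x \in reps -> in_gen S x,
        forall i j, (i < k)%N -> (j < k)%N ->
          conj_in S (nth 0 reps i) (nth 0 reps j) -> i = j
      & forall x, in_gen S x -> exists2 r, r \in reps & conj_in S r x].

From HB Require Import structures.
From mathcomp Require Import all_boot all_order all_algebra all_field all_fingroup.
From mathcomp Require Import zify.
Set Implicit Arguments. Unset Strict Implicit. Unset Printing Implicit Defensive.
Import GRing.Theory.

(* Write d = n.+1 and V = (Z/d)^2.  The diagonal matrices of G are
   the diag(xi^a, xi^b, xi^(q b - q^2 a)), and conjugating by B rotates these
   exponents, i.e. acts on V by sigma (a, b) = (b, q b - q^2 a); sigma^3 = 1
   because d divides q^3 + 1.  Hence G is isomorphic to V x| C3.  By Burnside's
   lemma for the conjugation action, #classes * |G| is the number of commuting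
   pairs, and in V x| C3 these number |V| (|V| + 8 |Fix sigma|): each of the
   eight pairs of rotation parts other than (0, 0) reduces, after a translation,
   to the fixed-point equation of sigma.  Finally sigma (a, b) = (a, b) iff
   b = a and d | a (q^2 - q + 1), which has gcd(d, q^2 - q + 1) solutions. *)

Lemma sum_ord_dvdn (d g : nat) : 0 < d -> \sum_(a < d * g) (d %| a) = g.
Proof.
move=> d_gt0; have [->|g_gt0] := posnP g; first by rewrite muln0 big_ord0.
rewrite -[in RHS](mulKn g d_gt0) divn_count_dvd -(big_mkord xpredT (fun a => (d %| a) : nat)).
rewrite big_ltn ?muln_gt0 ?d_gt0 // dvdn0 big_nat_recr ?muln_gt0 ?d_gt0 //=.
by rewrite dvdn_mulr // addnC.
Qed.

Lemma sum_ord_dvdn_mul (d m : nat) : 0 < d -> \sum_(a < d) (d %| a * m) = gcdn d m.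
Proof.
move=> d_gt0; set g := gcdn d m.
have g_gt0 : 0 < g by rewrite gcdn_gt0 d_gt0.
have dE : d = d %/ g * g by rewrite divnK ?dvdn_gcdl.
have dvd_mulE a : (d %| a * m) = (d %/ g %| a).
  rewrite -[RHS](dvdn_pmul2r g_gt0) -dE /g muln_gcdr dvdn_gcd.
  by rewrite (dvdn_mull a (dvdnn d)).
under eq_bigr do rewrite dvd_mulE.
have := @sum_ord_dvdn (d %/ g) g; rewrite -dE; apply.
by rewrite divn_gt0 // dvdn_leq ?dvdn_gcdl.
Qed.

Lemma sum_prod (T1 T2 : finType) (F : T1 * T2 -> nat) :
  \sum_(p : T1 * T2) F p = \sum_(b : T2) \sum_(a : T1) F (a, b).
Proof. by rewrite exchange_big pair_big; apply: eq_bigr => -[]. Qed.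

Lemma card_classes_commuting (gT : finGroupType) :
  #|classes [set: gT]| * #|gT| = \sum_(a : gT) \sum_(x : gT) ((x * a)%g == (a * x)%g).
Proof.
have actsJ : [acts [set: gT], on [set: gT] | 'J] by apply/actsP => a _ x; rewrite !inE.
rewrite -cardsT -(Frobenius_Cauchy actsJ); apply: eq_big => [a|a _]; first by rewrite inE.
rewrite setTI afixJ cent_set1 -sum1_card big_mkcond /=; apply: eq_bigr => x _.
by rewrite -(sameP cent1P eqP); case: (x \in _).
Qed.

Local Open Scope ring_scope.

Lemma eq_add_zmod_morphism (V : zmodType) (tau : V -> V) (x y : V) :
  {morph tau : a b / a - b} -> (x + tau y == y + tau x) = (tau (x - y) == x - y).
Proof.
move=> tauB; rewrite tauB -[LHS]subr_eq0 -[RHS]subr_eq0 -[LHS]oppr_eq0; congr (_ == 0).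
by rewrite opprB opprD !opprB addrACA addrC.
Qed.

Definition sdprodC3 (V : finZmodType) (sigma : V -> V)
  of (forall v, sigma (sigma (sigma v)) = v) : Type := (V * 'I_3)%type.

Section SemidirectC3.
Variables (V : finZmodType) (sigma : {additive V -> V}).
Hypothesis sigma3 : forall v, sigma (sigma (sigma v)) = v.

Definition sigmaX (e : 'I_3) (v : V) : V := iter e sigma v.

Lemma sigmaXD e : {morph sigmaX e : x y / x + y}.
Proof. by rewrite /sigmaX; elim: (e : nat) => //= m IH x y; rewrite IH raddfD. Qed.

Lemma sigmaXB e : {morph sigmaX e : x y / x - y}.
Proof. by rewrite /sigmaX; elim: (e : nat) => //= m IH x y; rewrite IH raddfB. Qed.

Lemma sigmaX0 e : sigmaX e 0 = 0.
Proof. by rewrite /sigmaX; elim: (e : nat) => //= m ->; rewrite raddf0. Qed.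

Lemma iter_sigma_mod3 m v : iter (m %% 3) sigma v = iter m sigma v.
Proof.
have iter_mul3 k : iter (k * 3) sigma v = v.
  by elim: k => // k IH; rewrite mulSn iterD IH /= sigma3.
by rewrite {2}(divn_eq m 3) addnC iterD iter_mul3.
Qed.

Lemma sigmaXA e f v : sigmaX e (sigmaX f v) = sigmaX (e + f) v.
Proof. by rewrite /sigmaX -iterD -iter_sigma_mod3. Qed.

Lemma sigmaX_fixed e v : e != 0 -> (sigmaX e v == v) = (sigma v == v).
Proof.
case: e => -[|[|[|//]]] He // _; rewrite /sigmaX //=.
by apply/eqP/eqP => [fix2|fix1]; [rewrite -{1}fix2 sigma3 | rewrite !fix1].
Qed.

Local Notation G := (sdprodC3 sigma3).
HB.instance Definition _ := Finite.copy G (V * 'I_3)%type.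

Definition sdmul (x y : G) : G := (x.1 + sigmaX x.2 y.1, x.2 + y.2).
Definition sdone : G := (0, 0).
Definition sdinv (x : G) : G := (- sigmaX (- x.2) x.1, - x.2).

Lemma sdmulA : associative sdmul.
Proof. by move=> [v e] [w f] [u g]; rewrite /sdmul /= sigmaXD sigmaXA !addrA. Qed.

Lemma sdmul1 : left_id sdone sdmul.
Proof. by move=> [v e]; rewrite /sdmul /= !add0r. Qed.

Lemma sdmulV : left_inverse sdone sdinv sdmul.
Proof. by move=> [v e]; rewrite /sdmul /= !addNr. Qed.

HB.instance Definition _ := Finite_isGroup.Build G sdmulA sdmul1 sdmulV.

Lemma sdmulE (x y : G) : (x * y)%g = (x.1 + sigmaX x.2 y.1, x.2 + y.2).
Proof. by []. Qed.

Definition sdvec v : G := (v, 0).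
Definition sdrot : G := (0, 1).

Lemma sdvecD v w : sdvec (v + w) = (sdvec v * sdvec w)%g.
Proof. by rewrite sdmulE /= addr0. Qed.

Lemma sdvecMn v k : sdvec (v *+ k) = (sdvec v ^+ k)%g.
Proof. by elim: k => [|k IHk]; rewrite ?mulr0n // mulrS expgS sdvecD IHk. Qed.

Lemma sdrotX (e : 'I_3) : (sdrot ^+ e)%g = (0, e).
Proof.
case: e => -[|[|[|//]]] He; rewrite /= ?expgS ?expg0 ?mulg1 ?sdmulE /= ?sigmaX0 ?addr0;
  by apply/eqP; rewrite xpair_eqE eqxx -val_eqE.
Qed.

Lemma sdprodC3_decomp v (e : 'I_3) : ((v, e) : G) = (sdvec v * sdrot ^+ e)%g.
Proof. by rewrite sdrotX sdmulE /= sigmaX0 addr0 add0r. Qed.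

Lemma sdrot_vec v : (sdrot * sdvec v)%g = (sdvec (sigma v) * sdrot)%g.
Proof. by rewrite !sdmulE /= sigmaX0 !add0r !addr0. Qed.

Lemma card_sdprodC3 : #|[set: G]| = (3 * #|V|)%N.
Proof. by rewrite cardsT card_prod card_ord mulnC. Qed.

Local Notation nfix := #|[set v : V | sigma v == v]|.

Lemma card_fixed_sum : nfix = (\sum_(v : V) (sigma v == v))%N.
Proof. by rewrite -sum1dep_card big_mkcond /=; apply: eq_bigr => v _; case: eqP. Qed.

Lemma sum_fixed_shift t : (\sum_(w : V) (sigma (w - t)%R == (w - t)%R))%N = nfix.
Proof.
by rewrite card_fixed_sum (reindex_inj (addIr t)); under eq_bigr do rewrite addrK.
Qed.

Lemma commute_sdprodC3 (a x : G) :
  ((x * a)%g == (a * x)%g) = (x.1 + sigmaX x.2 a.1 == a.1 + sigmaX a.2 x.1).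
Proof. by rewrite !sdmulE xpair_eqE [x.2 + _]addrC eqxx andbT. Qed.

Lemma eq_add_sigma2 x y :
  (x + sigma (sigma y) == y + sigma x) = (sigma (x - (y + sigma y)) == x - (y + sigma y)).
Proof.
rewrite -eq_add_zmod_morphism; last exact: raddfB.
by rewrite raddfD addrCA [y + sigma y]addrC -(addrA (sigma y)) (inj_eq (addrI _)).
Qed.

Lemma sum_commute_layer e f :
  (\sum_(v : V) \sum_(w : V) (w + sigmaX f v == v + sigmaX e w)%R)%N =
  (if (e == 0%R) && (f == 0%R) then #|V| ^ 2 else #|V| * nfix)%N.
Proof.
have [-> | e_nz] := eqVneq e 0; have [-> | f_nz] := eqVneq f 0 => /=.
- under eq_bigr do under eq_bigr do rewrite addrC eqxx.
  by rewrite !sum_nat_const muln1 mulnn.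
- under eq_bigr => v _ do under eq_bigr => w _ do
    rewrite [v + _]addrC (inj_eq (addrI _)) (sigmaX_fixed _ f_nz).
  by under eq_bigr do rewrite sum_nat_const; rewrite -big_distrr card_fixed_sum.
- under eq_bigr => v _ do under eq_bigr => w _ do
    rewrite [_ + v]addrC (inj_eq (addrI _)) eq_sym (sigmaX_fixed _ e_nz).
  by rewrite -card_fixed_sum sum_nat_const.
have [<- | e_neq_f] := eqVneq e f.
  under eq_bigr do under eq_bigr do
    rewrite (eq_add_zmod_morphism _ _ (sigmaXB e)) (sigmaX_fixed _ e_nz).
  by under eq_bigr do rewrite sum_fixed_shift; rewrite sum_nat_const.
move: e f e_nz f_nz e_neq_f => -[[|[|[|//]]] He] -[[|[|[|//]]] Hf] //= _ _ _.
  under eq_bigr do under eq_bigr do rewrite eq_add_sigma2.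
  by under eq_bigr do rewrite sum_fixed_shift; rewrite sum_nat_const.
rewrite exchange_big /=.
under eq_bigr do under eq_bigr do rewrite eq_sym eq_add_sigma2.
by under eq_bigr do rewrite sum_fixed_shift; rewrite sum_nat_const.
Qed.

Lemma sum_commute_sdprodC3 :
  (\sum_(a : G) \sum_(x : G) ((x * a)%g == (a * x)%g))%N = (#|V| * (#|V| + 8 * nfix))%N.
Proof.
rewrite sum_prod; under eq_bigr => e _ do under eq_bigr => v _ do rewrite sum_prod.
under eq_bigr => e _ do rewrite exchange_big.
under eq_bigr => e _ do under eq_bigr => f _ do
  under eq_bigr => v _ do under eq_bigr => w _ do rewrite commute_sdprodC3 /=.
under eq_bigr => e _ do under eq_bigr => f _ do rewrite sum_commute_layer.
rewrite !big_ord_recl !big_ord0 /=.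
by move: #|V| nfix => n m; nia.
Qed.

Theorem card_classes_sdprodC3 : (#|classes [set: G]| * 3 = #|V| + 8 * nfix)%N.
Proof.
have V_gt0 : (0 < #|V|)%N by apply/card_gt0P; exists 0.
apply/eqP; rewrite -(eqn_pmul2r V_gt0) -mulnA -card_sdprodC3 cardsT.
by rewrite card_classes_commuting sum_commute_sdprodC3 mulnC.
Qed.

End SemidirectC3.

Section FaithfulRepresentation.
Variables (gT : finGroupType) (n : nat) (phi : gT -> 'M[algC]_n) (s : seq gT).
Hypotheses (phi_inj : injective phi) (phi1 : phi 1%g = 1%:M).
Hypothesis phiM : {morph phi : x y / (x * y)%g >-> x *m y}.
Hypothesis s_gen : <<[set x in s]>>%g = [set: gT].
Local Notation S := (map phi s).

Lemma invmx_phi g : invmx (phi g) = phi g^-1%g.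
Proof.
have phiV : phi g *m phi g^-1%g = 1%:M by rewrite -phiM mulgV phi1.
have [phi_unit _] := mulmx1_unit phiV.
by rewrite -[LHS]mulmx1 -phiV mulmxA mulVmx // mul1mx.
Qed.

Lemma in_gen_phiP x : in_gen S x <-> exists g, x = phi g.
Proof.
split=> [|[g ->]].
  elim=> [|y _ /mapP[h _ ->] _ [g ->]|y _ /mapP[h _ ->] _ [g ->]].
  - by exists 1%g.
  - by exists (h * g)%g; rewrite phiM.
  - by exists (h^-1 * g)%g; rewrite phiM invmx_phi.
have : g \in <<[set x in s]>>%g by rewrite s_gen inE.
case/gen_prodgP=> m [c c_s ->]; elim: m c c_s => [|m IHm] c c_s.
  by rewrite big_ord0 phi1; apply: gen_one.
rewrite big_ord_recl phiM; apply: gen_mul; last by apply: IHm => i; apply: c_s.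
by apply: map_f; have := c_s ord0; rewrite inE.
Qed.

Lemma conj_in_phi u w : conj_in S (phi u) (phi w) <-> w \in (u ^: [set: gT])%g.
Proof.
split=> [[_ [/in_gen_phiP[g ->] wE]]|/imsetP[g _ ->]].
  apply/imsetP; exists g; rewrite ?inE //; apply: phi_inj.
  by rewrite wE invmx_phi -!phiM conjgE mulgA.
exists (phi g); split; first by apply/in_gen_phiP; exists g.
by rewrite invmx_phi -!phiM conjgE mulgA.
Qed.

Lemma num_conj_classes_phi k : num_conj_classes S k -> k = #|classes [set: gT]|.
Proof.
move=> [reps [size_reps reps_gen reps_inj reps_cover]].
pose rep (i : 'I_k) := odflt 1%g [pick g | phi g == nth 0 reps i].
have repE i : phi (rep i) = nth 0 reps i.
  have /reps_gen/in_gen_phiP[g gE] : nth 0 reps i \in reps by rewrite mem_nth ?size_reps.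
  by rewrite /rep; case: pickP => [h /eqP // | /(_ g)]; rewrite gE eqxx.
pose cls i := (rep i ^: [set: gT])%g.
have cls_inj : injective cls.
  move=> i j cls_ij; apply/val_inj/reps_inj; rewrite ?ltn_ord // -!repE.
  by apply/conj_in_phi; rewrite -/(cls i) cls_ij class_refl.
suff -> : classes [set: gT] = cls @: [set: 'I_k] by rewrite card_imset // cardsT card_ord.
apply/setP => C; apply/imsetP/imsetP => [[x _ ->]|[i _ ->]]; last by exists (rep i).
have /reps_cover[r r_reps r_x] : in_gen S (phi x) by apply/in_gen_phiP; exists x.
have r_idx : (index r reps < k)%N by rewrite -size_reps index_mem.
exists (Ordinal r_idx) => //; apply/class_eqP/conj_in_phi.
by rewrite repE nth_index.
Qed.
End FaithfulRepresentation.

(* The library does not itself make [U * W] a finZmodType for finite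
   Z-modules U and W. *)
HB.saturate prod.

Section Model.
Variables (n q : nat).
Local Notation Zd := 'I_n.+1.
Local Notation V := (Zd * Zd)%type.

Definition zsig (v : V) : V := (v.2, v.2 *+ q - v.1 *+ q ^ 2).

Lemma zsig_is_zmod_morphism : zmod_morphism zsig.
Proof.
move=> [a b] [c e]; congr (_, _).
change ((b - e) *+ q - (a - c) *+ q ^ 2 = b *+ q - a *+ q ^ 2 - (e *+ q - c *+ q ^ 2)).
by rewrite !mulrnBl !opprB addrACA [RHS]addrACA [- _ + _]addrC.
Qed.

HB.instance Definition _ := GRing.isZmodMorphism.Build V V zsig zsig_is_zmod_morphism.

Lemma card_fixed_zsig : #|[set v : V | zsig v == v]| = gcdn n.+1 (q ^ 2 - q + 1).
Proof.
rewrite card_fixed_sum sum_prod -sum_ord_dvdn_mul //; apply: eq_bigr => b _.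
rewrite (bigD1 b) //= big1 => [|a /negbTE a_neq_b]; last by rewrite xpair_eqE eq_sym a_neq_b.
rewrite xpair_eqE eqxx /= addn0 subr_eq -val_eqE /= !Zp_mulrn /= modnDmr.
have le_bq : (b * q <= b + b * q ^ 2)%N by nia.
by rewrite eq_sym eqn_mod_dvd //; congr (_ %| _)%N; nia.
Qed.

Lemma Zp1_mulrn (x : Zd) : Zp1 *+ x = x.
Proof. by apply: val_inj; rewrite Zp_mulrn /= modnMml mul1n modn_small. Qed.

Hypothesis dvd_q3 : (n.+1 %| q ^ 3 + 1)%N.

Lemma mulrn_q3 (x : Zd) : x *+ q ^ 3 = - x.
Proof.
have mulrn_char (y : Zd) : y *+ n.+1 = 0 by apply: val_inj; rewrite Zp_mulrn /= modnMl.
apply/eqP; rewrite -subr_eq0 opprK -mulrSr -addn1.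
by case/dvdnP: dvd_q3 => t ->; rewrite mulrnA mulrn_char.
Qed.

Lemma zsig3 v : zsig (zsig (zsig v)) = v.
Proof.
case: v => a b; congr (_, _); rewrite /= !mulrnBl -!mulrnA ?mulnn -?expnS -?expnSr.
all: by rewrite addrAC subrr add0r mulrn_q3 opprK.
Qed.

Local Notation G := (sdprodC3 zsig3).

Definition gdiag : G := sdvec zsig3 (0, Zp1).

(* (a, b) = a zsig (0, 1) + (b - a q) (0, 1), and conjugation by sdrot turns
   sdvec u into sdvec (zsig u). *)
Lemma gen_gdiag_sdrot : <<[set x in [:: gdiag; sdrot zsig3]]>>%g = [set: G].
Proof.
apply/eqP; rewrite eqEsubset subsetT /=; apply/subsetP => -[v e] _.
set H := <<_>>%g.
have diagH : gdiag \in H by apply: mem_gen; rewrite inE mem_head.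
have rotH : sdrot zsig3 \in H by apply: mem_gen; rewrite !inE eqxx orbT.
have zsigH u : sdvec zsig3 u \in H -> sdvec zsig3 (zsig u) \in H.
  move=> uH; rewrite -(mulgK (sdrot zsig3) (sdvec _ (zsig u))) -sdrot_vec.
  by rewrite !groupM ?groupV.
case: v => a b; have -> : b = a *+ q + (b - a *+ q) by rewrite addrC subrK.
move: (b - _) => m.
have -> : ((a, a *+ q + m) : V) = zsig (0, Zp1) *+ a + (0, Zp1) *+ m.
  rewrite !pairMnE; congr (_, _); simpl.
    by rewrite Zp1_mulrn mul0rn addr0.
  by rewrite mul0rn subr0 -mulrnA mulnC mulrnA !Zp1_mulrn.
by rewrite sdprodC3_decomp sdvecD !sdvecMn !groupM ?groupX ?zsigH.
Qed.

Variable xi : algC.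
Hypothesis xi_prim : n.+1.-primitive_root xi.

Definition zrep (x : G) : 'M[algC]_3 :=
  \matrix_(i, j) ((j == i + x.2)%:R * xi ^+ (sigmaX zsig i x.1).1).

Lemma zrepM : {morph zrep : x y / (x * y)%g >-> x *m y}.
Proof.
move=> [v e] [w f]; apply/matrixP => i j; rewrite !mxE.
rewrite (bigD1 (i + e)) //= big1 => [|k /negbTE k_neq]; last by rewrite !mxE k_neq !mul0r.
rewrite !mxE eqxx mul1r addr0 /= sigmaXD (sigmaXA zsig3); simpl.
by rewrite (prim_expr_mod xi_prim) exprD addrA mulrCA.
Qed.

Lemma zrep1 : zrep 1%g = 1%:M.
Proof.
apply/matrixP => i j; rewrite !mxE /= sigmaX0 addr0 eq_sym; simpl.
by rewrite expr0 mulr1.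
Qed.

Lemma zrep_inj : injective zrep.
Proof.
move=> [v e] [w f] /matrixP eq_rep.
have e_eq_f : e = f.
  have := eq_rep 0 (0 + e); rewrite !mxE /= eqxx mul1r.
  case: eqP => [/addrI // | _]; rewrite mul0r => /eqP.
  by rewrite expf_eq0 (prim_root_eq0 xi_prim) andbF.
subst f; have expE i : (sigmaX zsig i v).1 = (sigmaX zsig i w).1.
  have := eq_rep i (i + e); rewrite !mxE /= eqxx !mul1r => /eqP.
  by rewrite (eq_prim_root_expr xi_prim) !modn_small ?ltn_ord // => /eqP /val_inj.
by clear eq_rep; case: v w expE => a b [c d] expE; have := expE 0; have := expE 1; move=> /= -> ->.
Qed.

Lemma diagD_zrep : diagD xi q = zrep gdiag.
Proof.
apply/matrixP => i j; rewrite !mxE addr0 eq_sym.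
have [<- | _] := eqVneq j i; last by rewrite mul0r.
rewrite mul1r; case: j => -[|[|[|//]]] Hj; rewrite /= ?expr0 //.
  by rewrite (prim_expr_mod xi_prim).
rewrite mul0rn /= subn0 modnn addn0 (prim_expr_mod xi_prim) Zp_mulrn /= modnMml mul1n.
by rewrite (prim_expr_mod xi_prim).
Qed.

Lemma permB_zrep : permB = zrep (sdrot zsig3).
Proof.
by apply/matrixP => i j; rewrite !mxE /= sigmaX0 expr0 mulr1 -val_eqE /= addn1.
Qed.
End Model.

Theorem mainTheorem9 (d q : nat) (xi : algC) (k : nat) :
  (q < d)%N -> coprime d q -> (d %| q ^ 3 + 1)%N ->
  d.-primitive_root xi ->
  num_conj_classes [:: diagD xi q; permB] k ->
  (k%:R : rat) = ((d ^ 2 + 8 * gcdn d (q ^ 2 - q + 1))%N)%:R / 3.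
Proof.
move=> _ _ + xi_prim; case: d xi_prim => [/prim_order_gt0 // | n] xi_prim dvd_q3.
rewrite (diagD_zrep dvd_q3 xi_prim) (permB_zrep dvd_q3 xi).
move/(num_conj_classes_phi (zrep_inj xi_prim) (zrep1 dvd_q3 xi)
       (zrepM xi_prim) (gen_gdiag_sdrot dvd_q3)) ->.
have := card_classes_sdprodC3 (zsig3 dvd_q3).
rewrite card_fixed_zsig card_prod card_ord mulnn => <-.
by rewrite natrM mulfK.
Qed.
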